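(* Let $p$ be an odd prime, let $\Delta\in\mathbb{Z}$ with $\Delta\equiv 3\pmod 4$ be a quadratic non-residue modulo $p$, and let $\mathfrak{p}=p\mathbb{Z}[\sqrt{\Delta}]$. Let $A_p=\prod_{0\le k\le p-1}(k+\sqrt{\Delta})$. Then $$A_p^{\frac{(p-1)(p-3)}{4}}\equiv\begin{cases}\Delta^{-\frac{p-1}{4}}\pmod{\mathfrak{p}}&\text{if } p\equiv 1\pmod 4,\\ (-1)^{\frac{p-3}{4}}\pmod{\mathfrak{p}}&\text{if } p\equiv 3\pmod 4,\end{cases}$$ where $\Delta^{-1}$ denotes the inverse of $\Delta$ modulo $p$. *)

(* Z[sqrt D] modelled concretely as pairs (a,b) = a + b*sqrt D. *)
From mathcomp Require Import all_boot all_order all_algebra.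
Set Implicit Arguments. Unset Strict Implicit. Unset Printing Implicit Defensive.
Import Order.TTheory GRing.Theory Num.Theory.
Local Open Scope ring_scope.

Definition zsq_mul (D : int) (x y : int * int) : int * int :=
  (x.1 * y.1 + D * (x.2 * y.2), x.1 * y.2 + x.2 * y.1).

Definition zsq_exp (D : int) (x : int * int) (n : nat) : int * int :=
  iter n (zsq_mul D x) (1, 0).

Definition A_prod (D : int) (p : nat) : int * int :=
  foldr (fun k acc => zsq_mul D (k%:Z, 1) acc) (1, 0) (iota 0 p).

(* congruence modulo the ideal p Z[sqrt D]:  x - y in p Z[sqrt D] *)
Definition zsq_cong (p : nat) (x y : int * int) : bool :=
  (p%:Z %| x.1 - y.1)%Z && (p%:Z %| x.2 - y.2)%Z.

From mathcomp Require Import all_boot all_order all_algebra all_field.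
From mathcomp Require Import ring zify.
Set Implicit Arguments.
Unset Strict Implicit.
Unset Printing Implicit Defensive.
Import Order.TTheory GRing.Theory Num.Theory.
Local Open Scope ring_scope.

(* Reduce Z[sqrt D] modulo p to 2x2 matrices over F_p, where sqrt D becomes a
   matrix S with S^2 = D.  Since prod_(k in F_p) (X + k) = X^p - X, the image of
   A_p is S^p - S = (D^((p-1)/2) - 1) S.  Every factor k + sqrt D has norm
   k^2 - D, a unit mod p, so A_p is invertible: hence D^((p-1)/2) = -1 (Euler's
   criterion), A_p = -2 sqrt D and A_p^2 = 4 D mod p.  What remains is the value
   of (4 D)^((p-1)(p-3)/8) in F_p, obtained from D^((p-1)/2) = -1, Fermat, and,
   when p = 4m + 1, from 2^(2m) = (-1)^m: with w = (2m)! a square root of -1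
   (Wilson), 2 = -w (1 + w)^2. *)

Section PrimeField.
Variable p : nat.
Hypothesis p_pr : prime p.
Local Notation F := 'F_p.

Lemma Fp_fermat (x : F) : x != 0 -> x ^+ p.-1 = 1.
Proof.
move=> x_nz; apply: (mulIf x_nz).
have := expf_card x; rewrite card_Fp // => x_p.
by rewrite mul1r -exprSr prednK ?prime_gt0.
Qed.

Lemma prod_iota_XaddC : \prod_(k <- iota 0 p) ('X + k%:R%:P) = 'X^p - 'X :> {poly F}.
Proof.
transitivity ('X^#|F| - 'X : {poly F}); last by rewrite card_Fp.
rewrite finField_genPoly (reindex_inj oppr_inj) /=.
have -> : iota 0 p = index_iota 0 (Zp_trunc (pdiv p)).+2.
  by rewrite Fp_cast // /index_iota subn0.
by rewrite big_mkord; apply: eq_bigr => k _; rewrite polyCN opprK natr_Zp.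
Qed.

Lemma Fp_sqrtN1 m : (p = (4 * m).+1)%N -> exists w : F, w ^+ 2 = -1.
Proof.
move=> pE; have : ((p.-1)`!.+1%:R : F) == 0.
  by rewrite -(dvdn_pcharf (pchar_Fp p_pr)) -Wilson ?prime_gt1.
have -> : p.-1 = (2 * m + 2 * m)%N by rewrite pE /=; lia.
rewrite mulrSr addr_eq0 fact_prod big_add1 big_mkord natr_prod big_split_ord /=.
rewrite [X in _ * X](reindex_inj rev_ord_inj) /=.
set w := \prod_(i < 2 * m) _.
have negE (j : 'I_(2 * m)) : ((2 * m + (2 * m - j.+1)).+1%:R : F) = - j.+1%:R.
  apply/eqP; rewrite -addr_eq0 -natrD -(dvdn_pcharf (pchar_Fp p_pr)).
  have := ltn_ord j; rewrite pE => lt_j.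
  by rewrite (_ : _ + _ = (4 * m).+1)%N ?dvdnn //; lia.
under eq_bigr do rewrite negE.
by rewrite prodrN card_ord exprM sqrrN !expr1n mul1r -expr2 => /eqP; exists w.
Qed.

Lemma Fp_two_exp_half m : (p = (4 * m).+1)%N -> (2 : F) ^+ (2 * m)%N = (-1) ^+ m.
Proof.
move=> pE; have [w w2] := Fp_sqrtN1 pE.
have two_nz : (2 : F) != 0.
  rewrite -(dvdn_pcharf (pchar_Fp p_pr)) gtnNdvd //.
  by have := prime_gt1 p_pr; lia.
have sqr_1w : (1 + w) ^+ 2 = 2 * w.
  by rewrite sqrrD w2 expr1n addrAC subrr add0r mul1r -mulr_natl.
have w_nz : w != 0.
  by apply/eqP => w0; move/eqP: w2; rewrite w0 expr0n eq_sym oppr_eq0 oner_eq0.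
have nz_1w : 1 + w != 0.
  by apply/eqP => w1_0; move: (mulf_neq0 two_nz w_nz); rewrite -sqr_1w w1_0 expr0n eqxx.
have -> : 2 = - w * (1 + w) ^+ 2.
  by rewrite sqr_1w mulrCA mulNr -expr2 w2 opprK mulr1.
rewrite exprMn exprM sqrrN w2 -exprM (_ : 2 * (2 * m) = p.-1)%N; last by rewrite pE; lia.
by rewrite Fp_fermat ?mulr1 // expf_neq0.
Qed.

End PrimeField.

Section RegularRepresentation.
Variables (p : nat) (D : int).
Hypothesis p_pr : prime p.
Local Notation F := 'F_p.

(* a + b sqrt D acts on the basis (1, sqrt D) by the matrix [[a, D b], [b, a]]. *)
Definition zsq_mx (x : int * int) : 'M[F]_2 :=
  \matrix_(i, j) (if i == j then x.1%:~R else if i == 0 then (D * x.2)%:~R else x.2%:~R).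

Local Notation sqrtD := (zsq_mx (0, 1)).

Lemma zsq_mx_mul x y : zsq_mx (zsq_mul D x y) = zsq_mx x * zsq_mx y.
Proof.
case: x y => [a b] [c d]; apply/matrixP => i j.
rewrite !mxE !big_ord_recr big_ord0 !mxE.
by case: i j => [[|[|?]] ?] [[|[|?]] ?] //=; rewrite ?add0r ?intrD ?intrM; ring.
Qed.

Lemma zsq_mx_scalar a : zsq_mx (a, 0) = a%:~R%:M.
Proof.
apply/matrixP => i j; rewrite !mxE.
by case: i j => [[|[|?]] ?] [[|[|?]] ?] //=; rewrite mulr0.
Qed.

Lemma zsq_mx_exp x n : zsq_mx (zsq_exp D x n) = zsq_mx x ^+ n.
Proof.
elim: n => [|n IHn]; first by rewrite zsq_mx_scalar.
by rewrite exprS -IHn /zsq_exp iterS zsq_mx_mul.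
Qed.

Lemma zsq_cong_mx x y : zsq_mx x = zsq_mx y -> zsq_cong p x y.
Proof.
move=> xy; have := congr1 (fun M : 'M[F]_2 => M 0 0) xy.
have := congr1 (fun M : 'M[F]_2 => M 1 0) xy.
rewrite !mxE /= => /eqP x2y2 /eqP x1y1.
by apply/andP; rewrite !(dvdz_pcharf (pchar_Fp p_pr)) !intrB !subr_eq0.
Qed.

Lemma sqrtD_sqr : sqrtD ^+ 2 = D%:~R%:M.
Proof.
by rewrite expr2 -zsq_mx_mul /zsq_mul /= !(mul0r, mul1r, mulr1, add0r, addr0) zsq_mx_scalar.
Qed.

Lemma zsq_mx_add_nat (k : nat) : zsq_mx (k%:Z, 1) = sqrtD + k%:R%:M.
Proof.
apply/matrixP => i j; rewrite !mxE.
by case: i j => [[|[|?]] ?] [[|[|?]] ?] //=; rewrite ?mulr0 ?add0r ?addr0.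
Qed.

Lemma zsq_mx_unit x :
  ~~ (p%:Z %| x.1 ^+ 2 - D * x.2 ^+ 2)%Z -> zsq_mx x \is a GRing.unit.
Proof.
move=> norm_ndvd; have := zsq_mx_mul x (x.1, - x.2).
have -> : zsq_mul D x (x.1, - x.2) = (x.1 ^+ 2 - D * x.2 ^+ 2, 0).
  by rewrite /zsq_mul /=; congr pair; ring.
rewrite zsq_mx_scalar => /(congr1 (fun M => M \in unitmx)).
rewrite unitmx_mul unitmxE det_scalar unitfE expf_eq0 /= -(dvdz_pcharf (pchar_Fp p_pr)).
by rewrite (negPf norm_ndvd) => /esym/andP[].
Qed.

Lemma zsq_mx_A_prod : zsq_mx (A_prod D p) = \prod_(k <- iota 0 p) zsq_mx (k%:Z, 1).
Proof.
rewrite /A_prod; elim: (iota 0 p) => [|k s IHs] /=; first by rewrite big_nil zsq_mx_scalar.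
by rewrite big_cons zsq_mx_mul IHs.
Qed.

Lemma zsq_mx_A_prod_horner : zsq_mx (A_prod D p) = sqrtD ^+ p - sqrtD.
Proof.
have horner_add k : zsq_mx (k%:Z, 1) = horner_mx sqrtD ('X + k%:R%:P).
  by rewrite rmorphD /= horner_mx_X horner_mx_C zsq_mx_add_nat.
rewrite zsq_mx_A_prod; under eq_bigr do rewrite horner_add.
by rewrite -rmorph_prod prod_iota_XaddC // rmorphB rmorphXn /= horner_mx_X.
Qed.

Hypothesis p_odd : odd p.
Hypothesis D_nonres : forall x : int, ~~ (p%:Z %| x ^+ 2 - D)%Z.

Lemma zsq_mx_A_prod_unit : zsq_mx (A_prod D p) \is a GRing.unit.
Proof.
rewrite zsq_mx_A_prod; apply: unitr_prod => k _; apply: zsq_mx_unit.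
by rewrite /= expr1n mulr1 D_nonres.
Qed.

Lemma sqrtD_exp_p : sqrtD ^+ p = (D%:~R ^+ p./2)%:M * sqrtD.
Proof.
rewrite -[X in sqrtD ^+ X]odd_double_half p_odd add1n exprSr -muln2 mulnC exprM.
by rewrite sqrtD_sqr -rmorphXn.
Qed.

Lemma nonresidue_exp_half : (D%:~R : F) ^+ p./2 = -1.
Proof.
have D_nz : (D%:~R : F) != 0.
  have := D_nonres 0; rewrite expr0n sub0r (dvdz_pcharf (pchar_Fp p_pr)).
  by rewrite rmorphN oppr_eq0.
have /eqP := Fp_fermat p_pr D_nz.
rewrite -[in p.-1](odd_double_half p) p_odd -muln2 exprM sqrf_eq1.
case/orP=> [/eqP half1 | /eqP //]; have := zsq_mx_A_prod_unit.
by rewrite zsq_mx_A_prod_horner sqrtD_exp_p half1 mul1r subrr unitr0.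
Qed.

Lemma zsq_mx_A_prod_eq : zsq_mx (A_prod D p) = zsq_mx (0, -2).
Proof.
rewrite zsq_mx_A_prod_horner sqrtD_exp_p nonresidue_exp_half.
have -> : (-1 : F)%:M = zsq_mx (-1, 0) by rewrite zsq_mx_scalar rmorphN1.
rewrite -zsq_mx_mul; apply/matrixP => i j; rewrite !mxE.
by case: i j => [[|[|?]] ?] [[|[|?]] ?] //=; rewrite ?intrD ?intrM; ring.
Qed.

Lemma zsq_cong_A_prod_exp t (a : int) :
  ((4 * D)%:~R : F) ^+ t = a%:~R -> zsq_cong p (zsq_exp D (A_prod D p) t.*2) (a, 0).
Proof.
move=> fourD_t; apply: zsq_cong_mx.
rewrite zsq_mx_exp zsq_mx_A_prod_eq -muln2 mulnC exprM expr2 -zsq_mx_mul.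
have -> : zsq_mul D (0, -2) (0, -2) = (4 * D, 0) by rewrite /zsq_mul /=; congr pair; ring.
by rewrite !zsq_mx_scalar -rmorphXn fourD_t.
Qed.

Lemma four_D_exp n : ((4 * D)%:~R : F) ^+ n = 2 ^+ (2 * n) * D%:~R ^+ n.
Proof. by rewrite intrM exprMn exprM -natrX. Qed.

Lemma four_D_exp_1mod4 m (u : int) : (p = (4 * m).+1)%N -> (p%:Z %| u * D - 1)%Z ->
  ((4 * D)%:~R : F) ^+ (m * (2 * m).-1)%N = u%:~R ^+ m.
Proof.
move=> pE uD_1; have D_half := nonresidue_exp_half.
rewrite (_ : p./2 = 2 * m)%N in D_half; last by rewrite pE; lia.
have uD : (u%:~R : F) * D%:~R = 1.
  by apply/eqP; rewrite -subr_eq0 -intrM -(intrB _ _ 1) -(dvdz_pcharf (pchar_Fp p_pr)).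
have D_nz : (D%:~R : F) != 0.
  by apply: contra_eq_neq uD => ->; rewrite mulr0 eq_sym oner_eq0.
have exp_sum : (m * (2 * m).-1 + m = 2 * m * m)%N by nia.
apply: (mulIf (expf_neq0 m D_nz)); rewrite -exprMn uD expr1n four_D_exp.
rewrite -mulrA -exprD exp_sum mulnA exprM Fp_two_exp_half // exprM D_half.
by rewrite -exprM -exprD exp_sum -mulnA exprM sqrrN !expr1n.
Qed.

Lemma four_D_exp_3mod4 m : p = (4 * m + 3)%N ->
  ((4 * D)%:~R : F) ^+ (m * (2 * m + 1))%N = (-1) ^+ m.
Proof.
move=> pE; have D_half := nonresidue_exp_half.
rewrite (_ : p./2 = 2 * m + 1)%N in D_half; last by rewrite pE; lia.
have two_fermat : (2 : F) ^+ (2 * (2 * m + 1)) = 1.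
  rewrite (_ : 2 * _ = p.-1)%N; last by rewrite pE; lia.
  rewrite Fp_fermat // -(dvdn_pcharf (pchar_Fp p_pr)) gtnNdvd //; lia.
rewrite four_D_exp mulnCA mulnC exprM two_fermat expr1n mul1r.
by rewrite mulnC exprM D_half.
Qed.

End RegularRepresentation.

Theorem lemma2p1 (p : nat) (D : int) :
  prime p -> odd p ->
  (D %% 4)%Z = 3 ->
  (forall x : int, ~~ (p%:Z %| x ^+ 2 - D)%Z) ->
  ((p %% 4 = 1)%N ->
     forall u : int, (p%:Z %| u * D - 1)%Z ->
       zsq_cong p (zsq_exp D (A_prod D p) (((p - 1) * (p - 3)) %/ 4))
                  (u ^+ ((p - 1) %/ 4), 0))
  /\
  ((p %% 4 = 3)%N ->
       zsq_cong p (zsq_exp D (A_prod D p) (((p - 1) * (p - 3)) %/ 4))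
                  ((-1) ^+ ((p - 3) %/ 4), 0)).
Proof.
move=> p_pr p_odd _ D_nonres; split=> [p_mod4 u uD_1 | p_mod4].
- have pE : p = (4 * (p %/ 4)).+1 by lia.
  have -> : (((p - 1) * (p - 3)) %/ 4 = (p %/ 4 * (2 * (p %/ 4)).-1).*2)%N by nia.
  have -> : ((p - 1) %/ 4 = p %/ 4)%N by lia.
  apply: zsq_cong_A_prod_exp => //; rewrite rmorphXn.
  exact: four_D_exp_1mod4 pE uD_1.
- have pE : p = (4 * (p %/ 4) + 3)%N by lia.
  have -> : (((p - 1) * (p - 3)) %/ 4 = (p %/ 4 * (2 * (p %/ 4) + 1)).*2)%N by nia.
  have -> : ((p - 3) %/ 4 = p %/ 4)%N by lia.
  apply: zsq_cong_A_prod_exp => //; rewrite rmorphXn rmorphN1.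
  exact: four_D_exp_3mod4 pE.
Qed.
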